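(* Let $b\ge 2$ be an integer and let $w=d_1\dots d_p$ be a fixed block of $b$-ary digits of length $p\ge 1$. For each integer $k\ge 0$ let $$S_w(k)=\sum_{m}\frac1m,$$ where the sum runs over all positive integers $m$ whose minimal base-$b$ representation (the string of $b$-ary digits without leading zeros) contains exactly $k$ occurrences of $w$, counting possibly overlapping occurrences. Then for every integer $k\ge 1$, $$\Bigl|S_w(k)-b^{p}\log(b)\Bigr|\le (b-1)\,b^{\,p-\max(k,2)+1}.$$
   Context: An occurrence of $w$ in a string $X=x_1\dots x_l$ is an index $i$ with $1\le i\le l-p+1$ and $x_i x_{i+1}\dots x_{i+p-1}=w$. Different occurrences may overlap. *)

From Stdlib Require Import Reals Lra Lia Arith List ZArith.
From Coquelicot Require Import Coquelicot.
Import ListNotations.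
Open Scope R_scope.

(* Base-b digits of m, most significant first, without leading zeros
   (digits of 0 is the empty list).  The fuel m suffices when b >= 2. *)
Fixpoint digits_aux (b fuel m : nat) : list nat :=
  match fuel with
  | O => []
  | S f => if Nat.eqb m 0 then []
           else digits_aux b f (Nat.div m b) ++ [Nat.modulo m b]
  end.

Definition digits (b m : nat) : list nat := digits_aux b m m.

Definition occ (X w : list nat) : nat :=
  length (filter (fun i => if list_eq_dec Nat.eq_dec (firstn (length w) (skipn i X)) w
                           then true else false)
                 (seq 0 (length X + 1 - length w))).

(* n-th term (n >= 0) of the series S_w(k): corresponds to m = n+1. *)
Definition S_term (b : nat) (w : list nat) (k : nat) (n : nat) : R :=
  if Nat.eqb (occ (digits b (S n)) w) k then / INR (S n) else 0.

(* Write p = |w| and let W be the value of w in base b.  Numbers are handled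
   arithmetically: q * b^j + r is the numeral of q followed by the j-digit block r.
   A number m with exactly k occurrences of w splits uniquely as m = q * b^j + r,
   where q ends with the k-th occurrence and the tail r creates no further one.
   The number a_j of admissible tails of length j does not depend on q, and
   counting j-digit blocks by the position of their last occurrence of w gives
   sum_j a_j b^-j = b^p (the missing mass is the density of blocks avoiding w,
   which tends to 0).  Since 1/(q b^j + r) lies between 1/((q+1) b^j) and
   1/(q b^j), the series S_w(k) is about b^p * sum_q 1/q, the sum over the set
   B_k of numbers ending with their k-th occurrence.  Cutting every number with
   at least k occurrences at its k-th one shows sum_{q in B_k} ln(1 + 1/q) = ln b,
   and 1/q - ln(1 + 1/q) <= 1/q - 1/(q+1) telescopes to 1/min B_k <= b^(2-p-k);
   for p = k = 1 the one-digit element W of B_1 is estimated on its own. *)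

From Stdlib Require Import Reals List ZArith Arith Lia Bool Lra.
From Coquelicot Require Import Coquelicot.
Import ListNotations.
Open Scope R_scope.

Fixpoint sumR (f : nat -> R) (n : nat) : R :=
  match n with O => 0 | S n' => sumR f n' + f n' end.

Definition ind (x : bool) : R := if x then 1 else 0.

Section FiniteSums.

Implicit Types (f g : nat -> R) (n m : nat).

Lemma sumR_succ_l f n : sumR f (S n) = f O + sumR (fun i => f (S i)) n.
Proof. induction n as [|n IH]; simpl in *; [|rewrite IH]; lra. Qed.

Lemma sumR_ext f g n : (forall i, (i < n)%nat -> f i = g i) -> sumR f n = sumR g n.
Proof.
  induction n as [|n IH]; intros H; simpl; [lra|].
  rewrite IH, H; [lra | lia | intros; apply H; lia].
Qed.

Lemma sumR_plus f g n : sumR (fun i => f i + g i) n = sumR f n + sumR g n.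
Proof. induction n as [|n IH]; simpl; [|rewrite IH]; lra. Qed.

Lemma sumR_scal c f n : sumR (fun i => c * f i) n = c * sumR f n.
Proof. induction n as [|n IH]; simpl; [|rewrite IH]; lra. Qed.

Lemma sumR_mult_r f n c : sumR f n * c = sumR (fun i => f i * c) n.
Proof. rewrite Rmult_comm, <- sumR_scal. apply sumR_ext. intros; lra. Qed.

Lemma sumR_const c n : sumR (fun _ => c) n = INR n * c.
Proof. induction n as [|n IH]; simpl sumR; [simpl; lra|]. rewrite IH, S_INR. lra. Qed.

Lemma sumR_le f g n : (forall i, (i < n)%nat -> f i <= g i) -> sumR f n <= sumR g n.
Proof.
  induction n as [|n IH]; intros H; simpl; [lra|].
  assert (f n <= g n) by (apply H; lia).
  assert (sumR f n <= sumR g n) by (apply IH; intros; apply H; lia). lra.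
Qed.

Lemma sumR_nonneg f n : (forall i, (i < n)%nat -> 0 <= f i) -> 0 <= sumR f n.
Proof.
  intros H. rewrite <- (Rmult_0_r (INR n)), <- sumR_const. now apply sumR_le.
Qed.

Lemma sumR_swap (f : nat -> nat -> R) n m :
  sumR (fun i => sumR (fun j => f i j) m) n = sumR (fun j => sumR (fun i => f i j) n) m.
Proof.
  induction n as [|n IH]; simpl.
  - rewrite sumR_const. lra.
  - rewrite IH, <- sumR_plus. reflexivity.
Qed.

Lemma sumR_add_range f n m : sumR f (n + m) = sumR f n + sumR (fun i => f (n + i)%nat) m.
Proof.
  induction m as [|m IH]; simpl; [rewrite Nat.add_0_r; lra|].
  rewrite Nat.add_succ_r. simpl. rewrite IH. lra.
Qed.

Lemma sumR_blocks g B c : sumR g (B * c) = sumR (fun q => sumR (fun r => g (q * c + r)%nat) c) B.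
Proof.
  induction B as [|B IH]; simpl; [reflexivity|]. rewrite <- IH.
  replace (c + B * c)%nat with (B * c + c)%nat by lia. apply sumR_add_range.
Qed.

Lemma sumR_le_length f n m : (forall i, 0 <= f i) -> (n <= m)%nat -> sumR f n <= sumR f m.
Proof.
  intros H Hnm. replace m with (n + (m - n))%nat by lia. rewrite sumR_add_range.
  assert (0 <= sumR (fun i => f (n + i)%nat) (m - n)) by (apply sumR_nonneg; auto). lra.
Qed.

Lemma sumR_rev f n : sumR (fun j => f (n - j)%nat) n = sumR (fun t => f (S t)) n.
Proof.
  induction n as [|n IH]; [reflexivity|].
  rewrite sumR_succ_l, Nat.sub_0_r, (sumR_ext _ (fun j => f (n - j)%nat)) by (intros; f_equal).
  rewrite IH. simpl sumR. lra.
Qed.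

Lemma sumR_ind_eq n W : (W < n)%nat -> sumR (fun v => ind (v =? W)) n = 1.
Proof.
  induction n as [|n IH]; intros H; [lia|]. simpl sumR.
  destruct (Nat.eq_dec W n) as [->|HWn].
  - rewrite Nat.eqb_refl, (sumR_ext _ (fun _ => 0)), sumR_const; [simpl; lra|].
    intros i Hi. destruct (Nat.eqb_spec i n); [lia | reflexivity].
  - rewrite IH by lia. destruct (Nat.eqb_spec n W); [lia|]. simpl. lra.
Qed.

Lemma sumR_ind_eq_le1 n W : sumR (fun v => ind (v =? W)) n <= 1.
Proof.
  destruct (Nat.ltb_spec W n); [rewrite sumR_ind_eq; auto; lra|].
  rewrite (sumR_ext _ (fun _ => 0)), sumR_const; [lra|].
  intros i Hi. destruct (Nat.eqb_spec i W); [lia | reflexivity].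
Qed.

Lemma sumR_ind_mod_eq B c W : (W < c)%nat ->
  sumR (fun x => ind (x mod c =? W)) (B * c) = INR B.
Proof.
  intros HW. rewrite sumR_blocks, (sumR_ext _ (fun _ => 1)), sumR_const; [lra|].
  intros q _. rewrite <- (sumR_ind_eq c W HW). apply sumR_ext. intros r Hr.
  rewrite Nat.add_comm, Nat.Div0.mod_add, Nat.mod_small by lia. reflexivity.
Qed.

End FiniteSums.

Lemma ind_nonneg x : 0 <= ind x.
Proof. destruct x; simpl; lra. Qed.

Lemma ind_le1 x : ind x <= 1.
Proof. destruct x; simpl; lra. Qed.

Lemma ind_andb x y : ind (x && y) = ind x * ind y.
Proof. destruct x, y; simpl; lra. Qed.

Section Concatenation.
Local Open Scope nat_scope.

Variable b : nat.
Hypothesis b_pos : 1 <= b.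

Lemma pow_ge_1 j : 1 <= b ^ j.
Proof. pose proof (Nat.pow_nonzero b j). lia. Qed.

Lemma div_pow_le x j : x / b ^ j <= x.
Proof. apply Nat.Div0.div_le_upper_bound. pose proof (pow_ge_1 j). nia. Qed.

Lemma div_concat q r j : r < b ^ j -> (q * b ^ j + r) / b ^ j = q.
Proof.
  intros Hr. pose proof (pow_ge_1 j).
  rewrite Nat.div_add_l, Nat.div_small by lia. lia.
Qed.

Lemma mod_concat q r j : r < b ^ j -> (q * b ^ j + r) mod b ^ j = r.
Proof. intros Hr. rewrite Nat.add_comm, Nat.Div0.mod_add. now apply Nat.mod_small. Qed.

Lemma div_concat_base q r j : (q * b ^ S j + r) / b = q * b ^ j + r / b.
Proof.
  replace (q * b ^ S j) with (q * b ^ j * b) by (simpl; ring).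
  rewrite Nat.div_add_l by lia. reflexivity.
Qed.

Lemma mod_concat_high p q q' r j : q mod b ^ p = q' mod b ^ p ->
  (q * b ^ j + r) mod b ^ p = (q' * b ^ j + r) mod b ^ p.
Proof.
  intros H.
  rewrite (Nat.div_mod_eq q (b ^ p)), (Nat.div_mod_eq q' (b ^ p)), H.
  rewrite !Nat.mul_add_distr_r, <- !Nat.add_assoc, <- !Nat.mul_assoc,
    !(Nat.mul_comm (b ^ p) (_ * b ^ j)), !(Nat.add_comm (_ * b ^ j * b ^ p)), !Nat.Div0.mod_add.
  reflexivity.
Qed.

Lemma mod_concat_low p q r j : p <= j -> (q * b ^ j + r) mod b ^ p = r mod b ^ p.
Proof.
  intros H. replace j with ((j - p) + p) by lia.
  rewrite Nat.pow_add_r, Nat.mul_assoc, Nat.add_comm, Nat.Div0.mod_add. reflexivity.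
Qed.

Lemma div_pow_succ x j : x / b ^ S j = x / b / b ^ j.
Proof. now rewrite Nat.Div0.div_div. Qed.

Lemma mod_pow_succ_div x j : (x mod b ^ S j) / b = (x / b) mod b ^ j.
Proof.
  simpl. rewrite Nat.Div0.mod_mul_r, Nat.add_comm, Nat.mul_comm, Nat.div_add_l by lia.
  rewrite (Nat.div_small (x mod b) b) by (apply Nat.mod_upper_bound; lia). lia.
Qed.

Lemma mod_pow_succ_mod x j : (x mod b ^ S j) mod b = x mod b.
Proof.
  simpl. rewrite Nat.Div0.mod_mul_r, Nat.mul_comm, Nat.Div0.mod_add. apply Nat.Div0.mod_mod.
Qed.

Lemma lt_pow_succ_div r j : r < b ^ S j -> r / b < b ^ j.
Proof. intros Hr. apply Nat.Div0.div_lt_upper_bound. now rewrite <- Nat.pow_succ_r'. Qed.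

End Concatenation.

Section Occurrences.
Local Open Scope nat_scope.

Variables b p W : nat.
Hypothesis Hb : 2 <= b.

Let b_pos : 1 <= b. Proof. lia. Qed.

Definition ends_with (x : nat) : bool := (b ^ (p - 1) <=? x) && (x mod b ^ p =? W).

Fixpoint occs_fuel (fuel m : nat) : nat :=
  match fuel with
  | O => O
  | S f => if m =? 0 then O else occs_fuel f (m / b) + Nat.b2n (ends_with m)
  end.

Definition occs (m : nat) : nat := occs_fuel m m.

(* r is read as an L-digit block, leading zeros included; the occurrence must lie
   inside the block. *)
Fixpoint has_occ (L r : nat) : bool :=
  match L with
  | O => false
  | S L' => has_occ L' (r / b) || ((p <=? L) && (r mod b ^ p =? W))
  end.

Lemma div_base_lt m : 1 <= m -> m / b < m.
Proof. intros. apply Nat.div_lt; lia. Qed.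

Lemma occs_fuel_enough f1 f2 m : m <= f1 -> m <= f2 -> occs_fuel f1 m = occs_fuel f2 m.
Proof.
  revert f2 m. induction f1 as [|f1 IH]; intros [|f2] m H1 H2; simpl; try (replace m with 0 by lia; reflexivity).
  destruct (Nat.eqb_spec m 0); [reflexivity|].
  f_equal. apply IH; pose proof (div_base_lt m); lia.
Qed.

Lemma occs_0 : occs 0 = 0.
Proof. reflexivity. Qed.

Lemma occs_div m : 1 <= m -> occs m = occs (m / b) + Nat.b2n (ends_with m).
Proof.
  intros Hm. unfold occs at 1. destruct m as [|m']; [lia|].
  simpl occs_fuel. f_equal. apply occs_fuel_enough; pose proof (div_base_lt (S m')); lia.
Qed.

Lemma ends_with_pos x : ends_with x = true -> 1 <= x.
Proof.
  unfold ends_with. intros [H _]%andb_prop. apply Nat.leb_le in H.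
  pose proof (pow_ge_1 b b_pos (p - 1)). lia.
Qed.

Lemma ends_with_0 : ends_with 0 = false.
Proof. destruct (ends_with 0) eqn:E; [apply ends_with_pos in E; lia | reflexivity]. Qed.

Lemma ends_with_ge q m : q <= m -> ends_with q = true -> ends_with m = (m mod b ^ p =? W).
Proof.
  unfold ends_with. intros H [E _]%andb_prop. apply Nat.leb_le in E.
  destruct (Nat.leb_spec (b ^ (p - 1)) m); [reflexivity | lia].
Qed.

Lemma occs_concat_ge q r j : 1 <= q -> r < b ^ j ->
  occs q + Nat.b2n (has_occ j r) <= occs (q * b ^ j + r).
Proof.
  intros Hq. revert r. induction j as [|j IH]; intros r Hr.
  - simpl in Hr. replace r with 0 by lia. cbn [has_occ Nat.b2n]. rewrite Nat.pow_0_r, Nat.mul_1_r, !Nat.add_0_r. lia.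
  - pose proof (pow_ge_1 b b_pos (S j)).
    rewrite (occs_div (q * b ^ S j + r)), div_concat_base by nia.
    specialize (IH (r / b) (lt_pow_succ_div b r j Hr)).
    simpl has_occ. destruct (has_occ j (r / b)); cbn [orb Nat.b2n] in *; [lia|].
    destruct ((p <=? S j) && (r mod b ^ p =? W)) eqn:E; cbn [Nat.b2n]; [|lia].
    apply andb_prop in E as [E1 E2]. apply Nat.leb_le in E1.
    assert (ends_with (q * b ^ S j + r) = true) as ->; [|simpl; lia].
    apply andb_true_intro. split.
    + apply Nat.leb_le. pose proof (Nat.pow_le_mono_r b (p - 1) (S j) ltac:(lia) ltac:(lia)). nia.
    + rewrite mod_concat_low by lia. exact E2.
Qed.

Lemma occs_lower_bound q k : k + 1 <= occs q -> b ^ (p - 1 + k) <= q.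
Proof.
  revert k. induction q as [q IH] using lt_wf_ind. intros k Hk.
  destruct (Nat.eq_dec q 0) as [->|Hq0]; [rewrite occs_0 in Hk; lia|].
  rewrite occs_div in Hk by lia.
  pose proof (div_base_lt q ltac:(lia)) as Hlt.
  pose proof (Nat.Div0.mul_div_le q b).
  destruct (ends_with q) eqn:E; cbn [Nat.b2n] in Hk.
  - destruct k as [|k].
    + apply andb_prop in E as [E _]. apply Nat.leb_le in E. now rewrite Nat.add_0_r.
    + specialize (IH (q / b) Hlt k ltac:(lia)).
      replace (p - 1 + S k) with (S (p - 1 + k)) by lia. simpl. nia.
  - destruct k as [|k].
    + specialize (IH (q / b) Hlt 0 ltac:(lia)). rewrite Nat.add_0_r in *. nia.
    + specialize (IH (q / b) Hlt (S k) ltac:(lia)). nia.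
Qed.

Lemma has_occ_length L x : has_occ L x = true -> p <= L.
Proof.
  revert x. induction L as [|L IH]; intros x H; simpl in H; [discriminate|].
  apply orb_prop in H as [H|[H _]%andb_prop]; [apply IH in H | apply Nat.leb_le in H]; lia.
Qed.

Lemma has_occ_concat j l x y : y < b ^ j -> has_occ l x = true -> has_occ (l + j) (x * b ^ j + y) = true.
Proof.
  revert l x y. induction j as [|j IH]; intros l x y Hy H.
  - simpl in Hy. replace y with 0 by lia. now rewrite Nat.add_0_r, Nat.pow_0_r, Nat.mul_1_r, Nat.add_0_r.
  - rewrite Nat.add_succ_r. cbn [has_occ]. rewrite div_concat_base, IH; auto.
    now apply lt_pow_succ_div.
Qed.

End Occurrences.

Section Digits.
Local Open Scope nat_scope.

Variable b : nat.
Hypothesis Hb : 2 <= b.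

Fixpoint pad_digits (j x : nat) : list nat :=
  match j with O => [] | S j' => pad_digits j' (x / b) ++ [x mod b] end.

Definition eval_digits (w : list nat) : nat := fold_left (fun acc d => acc * b + d) w 0.

Definition suffixb (w X : list nat) : bool :=
  (length w <=? length X)
  && (if list_eq_dec Nat.eq_dec (skipn (length X - length w) X) w then true else false).

Lemma digits_fuel_enough f1 f2 m : m <= f1 -> m <= f2 -> digits_aux b f1 m = digits_aux b f2 m.
Proof.
  revert f2 m. induction f1 as [|f1 IH]; intros [|f2] m H1 H2; simpl; try (replace m with 0 by lia; reflexivity).
  destruct (Nat.eqb_spec m 0); [reflexivity|].
  f_equal. apply IH; pose proof (div_base_lt b Hb m); lia.
Qed.

Lemma digits_div m : 1 <= m -> digits b m = digits b (m / b) ++ [m mod b].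
Proof.
  intros Hm. unfold digits at 1. destruct m as [|m']; [lia|].
  simpl digits_aux. f_equal. apply digits_fuel_enough; pose proof (div_base_lt b Hb (S m')); lia.
Qed.

Lemma length_digits_le j m : m < b ^ j <-> length (digits b m) <= j.
Proof.
  revert m. induction j as [|j IH]; intros m.
  - destruct (Nat.eq_dec m 0) as [->|]; [simpl; lia|].
    rewrite digits_div, length_app by lia. simpl. lia.
  - destruct (Nat.eq_dec m 0) as [->|].
    { change (digits b 0) with (@nil nat). pose proof (pow_ge_1 b ltac:(lia) (S j)). simpl length. lia. }
    rewrite digits_div, length_app by lia. simpl length.
    assert (m < b ^ S j <-> m / b < b ^ j) as ->.
    { split; [apply lt_pow_succ_div|].
      intros H. pose proof (Nat.div_mod_eq m b). pose proof (Nat.mod_upper_bound m b ltac:(lia)).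
      rewrite Nat.pow_succ_r'. nia. }
    rewrite IH. lia.
Qed.

Lemma eval_digits_snoc l d : eval_digits (l ++ [d]) = eval_digits l * b + d.
Proof. unfold eval_digits. now rewrite fold_left_app. Qed.

Lemma eval_pad_digits j x : eval_digits (pad_digits j x) = x mod b ^ j.
Proof.
  revert x. induction j as [|j IH]; intros x; simpl pad_digits.
  - now rewrite Nat.pow_0_r, Nat.mod_1_r.
  - rewrite eval_digits_snoc, IH, Nat.pow_succ_r', Nat.Div0.mod_mul_r. lia.
Qed.

Lemma pad_eval_digits w : List.Forall (fun d => d < b) w -> pad_digits (length w) (eval_digits w) = w.
Proof.
  induction w as [|d w IH] using rev_ind; intros H; [reflexivity|].
  apply Forall_app in H as [H1 H2]. apply Forall_inv in H2.
  rewrite length_app, Nat.add_1_r, eval_digits_snoc. simpl pad_digits.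
  rewrite Nat.div_add_l, Nat.div_small, Nat.add_0_r, IH by (auto; lia).
  rewrite Nat.add_comm, Nat.Div0.mod_add, Nat.mod_small by lia. reflexivity.
Qed.

Lemma eval_digits_lt w : List.Forall (fun d => d < b) w -> eval_digits w < b ^ length w.
Proof.
  intros H. rewrite <- (pad_eval_digits w H) at 1. rewrite eval_pad_digits.
  apply Nat.mod_upper_bound. pose proof (pow_ge_1 b ltac:(lia) (length w)). lia.
Qed.

Lemma skipn_digits m j : j <= length (digits b m) ->
  skipn (length (digits b m) - j) (digits b m) = pad_digits j (m mod b ^ j).
Proof.
  revert j. induction m as [m IH] using lt_wf_ind. intros j Hj.
  destruct (Nat.eq_dec m 0) as [->|Hm]; [simpl in Hj; now replace j with 0 by lia|].
  destruct j as [|j]; [rewrite Nat.sub_0_r; apply skipn_all2; lia|].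
  rewrite digits_div, length_app in * by lia. simpl length in *.
  rewrite skipn_app.
  replace (length (digits b (m / b)) + 1 - S j - length (digits b (m / b))) with 0 by lia.
  replace (length (digits b (m / b)) + 1 - S j) with (length (digits b (m / b)) - j) by lia.
  rewrite IH by (try apply div_base_lt; lia).
  cbn [pad_digits]. now rewrite mod_pow_succ_div, mod_pow_succ_mod by lia.
Qed.

Lemma occ_nil w : 1 <= length w -> occ [] w = 0.
Proof. intros. unfold occ. simpl length. now destruct (length w) eqn:E; [lia|]. Qed.

Lemma occ_snoc X d w : 1 <= length w -> occ (X ++ [d]) w = occ X w + Nat.b2n (suffixb w (X ++ [d])).
Proof.
  intros Hp. unfold occ, suffixb. rewrite length_app. simpl length.
  set (p := length w).
  destruct (Nat.le_gt_cases p (length X + 1)) as [H|H].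
  - replace (length X + 1 + 1 - p) with (S (length X + 1 - p)) by lia.
    rewrite seq_S, filter_app, length_app. simpl (0 + _).
    f_equal.
    + f_equal. apply filter_ext_in. intros i Hi. apply in_seq in Hi.
      rewrite skipn_app. replace (i - length X) with 0 by lia. simpl skipn at 2.
      assert (E : firstn p (skipn i X ++ [d]) = firstn p (skipn i X)).
      { rewrite firstn_app, length_skipn. replace (p - (length X - i)) with 0 by lia.
        apply app_nil_r. }
      destruct (list_eq_dec Nat.eq_dec (firstn p (skipn i X ++ [d])) w),
        (list_eq_dec Nat.eq_dec (firstn p (skipn i X)) w); congruence.
    + assert (Hl : p <=? length X + 1 = true) by (apply Nat.leb_le; lia). rewrite Hl. simpl.
      rewrite firstn_all2; [|rewrite length_skipn, length_app; simpl; lia].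
      now destruct (list_eq_dec Nat.eq_dec _ w).
  - replace (length X + 1 + 1 - p) with 0 by lia. replace (length X + 1 - p) with 0 by lia.
    assert (Hl : p <=? length X + 1 = false) by (apply Nat.leb_gt; lia). now rewrite Hl.
Qed.

Section Word.

Variable w : list nat.
Hypothesis w_nonempty : 1 <= length w.
Hypothesis w_digits : List.Forall (fun d => d < b) w.

Lemma suffixb_digits m : 1 <= m ->
  suffixb w (digits b m) = ends_with b (length w) (eval_digits w) m.
Proof.
  intros Hm. unfold suffixb, ends_with.
  set (p := length w).
  pose proof (length_digits_le (p - 1) m) as Hlen.
  replace (p <=? length (digits b m)) with (b ^ (p - 1) <=? m)
    by (destruct (Nat.leb_spec p (length (digits b m))), (Nat.leb_spec (b ^ (p - 1)) m); auto; lia).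
  destruct (Nat.leb_spec (b ^ (p - 1)) m) as [H|H]; [simpl andb|reflexivity].
  rewrite skipn_digits by lia.
  assert (Hbp : 1 <= b ^ p) by (apply pow_ge_1; lia).
  destruct (list_eq_dec Nat.eq_dec (pad_digits p (m mod b ^ p)) w) as [E|E]; symmetry.
  - apply Nat.eqb_eq. rewrite <- E, eval_pad_digits. symmetry. apply Nat.Div0.mod_mod.
  - apply Nat.eqb_neq. intros E2. apply E. rewrite E2. now apply pad_eval_digits.
Qed.

Lemma occ_digits m : occ (digits b m) w = occs b (length w) (eval_digits w) m.
Proof.
  induction m as [m IH] using lt_wf_ind.
  destruct (Nat.eq_dec m 0) as [->|Hm]; [now rewrite occ_nil|].
  rewrite digits_div, occ_snoc, <- digits_div, suffixb_digits, occs_div, IH by (try apply div_base_lt; lia).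
  reflexivity.
Qed.

End Word.

End Digits.

Section Splits.

Variables b p W : nat.
Hypothesis Hb : (2 <= b)%nat.

Local Notation ends_with := (ends_with b p W).
Local Notation occs := (occs b p W).
Local Notation has_occ := (has_occ b p W).

Definition kth_end (k q : nat) : bool := ends_with q && (occs q =? k).

Lemma kth_end_pos k q : kth_end k q = true -> (1 <= q)%nat.
Proof. intros [H _]%andb_prop. exact (ends_with_pos b p W Hb q H). Qed.

Lemma occs_ge_split k J m : (1 <= k)%nat -> (m < b ^ J)%nat ->
  sumR (fun j => ind (kth_end k (m / b ^ j))) J = ind (k <=? occs m).
Proof.
  intros Hk. revert m. induction J as [|J IH]; intros m Hm.
  - simpl in Hm. replace m with 0%nat by lia. destruct k; [lia|]. simpl. lra.
  - rewrite sumR_succ_l, Nat.pow_0_r, Nat.div_1_r.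
    rewrite (sumR_ext _ (fun j => ind (kth_end k (m / b / b ^ j))))
      by (intros; now rewrite div_pow_succ).
    rewrite IH by now apply lt_pow_succ_div.
    destruct (Nat.eq_dec m 0) as [->|Hm0].
    { unfold kth_end. rewrite (ends_with_0 b p W Hb), Nat.Div0.div_0_l, (occs_0 b p W).
      destruct k; [lia|]. simpl. lra. }
    unfold kth_end. rewrite (occs_div b p W Hb m) by lia.
    destruct (ends_with m); simpl; rewrite ?Nat.add_0_r; [|lra].
    destruct (Nat.eqb_spec (occs (m / b) + 1) k), (Nat.leb_spec k (occs (m / b))),
      (Nat.leb_spec k (occs (m / b) + 1)); simpl; lra || lia.
Qed.

Section LastOccurrence.

Variable V : nat.
Hypothesis HV : ends_with V = true.

(* Only the final w of V can overlap the appended block r, so this does not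
   depend on the choice of V. *)
Definition no_new_occ (j r : nat) : bool := occs (V * b ^ j + r) =? occs V.

Lemma no_new_occ_succ m j : ((m / b ^ S j) mod b ^ p = W)%nat ->
  no_new_occ (S j) (m mod b ^ S j) = no_new_occ j ((m / b) mod b ^ j) && negb (m mod b ^ p =? W).
Proof.
  intros Hq. unfold no_new_occ.
  pose proof (ends_with_pos b p W Hb V HV).
  pose proof (pow_ge_1 b ltac:(lia) (S j)).
  rewrite (occs_div b p W Hb (V * b ^ S j + m mod b ^ S j)), div_concat_base, mod_pow_succ_div by nia.
  assert (Hend : ends_with (V * b ^ S j + m mod b ^ S j) = (m mod b ^ p =? W)).
  { rewrite (ends_with_ge b p W Hb V) by (auto; nia).
    apply andb_prop in HV as [_ HV2]. apply Nat.eqb_eq in HV2.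
    rewrite (mod_concat_high b p V (m / b ^ S j)) by congruence.
    now rewrite Nat.mul_comm, <- Nat.div_mod_eq. }
  rewrite Hend.
  assert ((m / b) mod b ^ j < b ^ j)%nat
    by (apply Nat.mod_upper_bound; pose proof (pow_ge_1 b ltac:(lia) j); lia).
  pose proof (occs_concat_ge b p W Hb V ((m / b) mod b ^ j) j ltac:(lia) ltac:(lia)).
  destruct (m mod b ^ p =? W); simpl.
  - rewrite andb_false_r. apply Nat.eqb_neq. lia.
  - now rewrite andb_true_r, Nat.add_0_r.
Qed.

Lemma occs_eq_split k J m : (1 <= k)%nat -> (m < b ^ J)%nat ->
  sumR (fun j => ind (kth_end k (m / b ^ j) && no_new_occ j (m mod b ^ j))) J = ind (occs m =? k).
Proof.
  intros Hk. revert m. induction J as [|J IH]; intros m Hm.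
  - simpl in Hm. replace m with 0%nat by lia. destruct k; [lia|]. simpl. lra.
  - rewrite sumR_succ_l, Nat.pow_0_r, Nat.div_1_r, Nat.mod_1_r.
    unfold no_new_occ at 1. rewrite Nat.mul_1_r, Nat.add_0_r, Nat.eqb_refl, andb_true_r.
    rewrite (sumR_ext _ (fun j => ind (negb (ends_with m))
        * ind (kth_end k (m / b / b ^ j) && no_new_occ j ((m / b) mod b ^ j)))).
    2:{ intros j _. rewrite <- ind_andb, <- div_pow_succ. f_equal. unfold kth_end.
        destruct (ends_with (m / b ^ S j)) eqn:Eq; [|simpl; now rewrite andb_false_r].
        rewrite (ends_with_ge b p W Hb (m / b ^ S j) m (div_pow_le b ltac:(lia) m (S j)) Eq).
        apply andb_prop in Eq as [_ Eq]. apply Nat.eqb_eq in Eq.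
        rewrite no_new_occ_succ by exact Eq. now destruct (occs _ =? k), (m mod b ^ p =? W), no_new_occ. }
    rewrite sumR_scal, IH by now apply lt_pow_succ_div.
    destruct (Nat.eq_dec m 0) as [->|Hm0].
    { unfold kth_end. rewrite (ends_with_0 b p W Hb), Nat.Div0.div_0_l, (occs_0 b p W).
      destruct k; [lia|]. simpl. lra. }
    unfold kth_end. rewrite (occs_div b p W Hb m) by lia.
    destruct (ends_with m); simpl; rewrite ?Nat.add_0_r, ?andb_true_r; simpl; lra.
Qed.

Lemma has_occ_split L r :
  sumR (fun j => ind ((p + j <=? L) && ((r / b ^ j) mod b ^ p =? W) && no_new_occ j (r mod b ^ j))) L
  = ind (has_occ L r).
Proof.
  revert r. induction L as [|L IH]; intros r; [simpl; lra|].
  rewrite sumR_succ_l, Nat.pow_0_r, Nat.div_1_r, Nat.mod_1_r.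
  unfold no_new_occ at 1. rewrite Nat.mul_1_r, !Nat.add_0_r, Nat.eqb_refl, andb_true_r.
  rewrite (sumR_ext _ (fun j => ind (negb (r mod b ^ p =? W))
      * ind ((p + j <=? L) && ((r / b / b ^ j) mod b ^ p =? W) && no_new_occ j ((r / b) mod b ^ j)))).
  2:{ intros j _. rewrite <- ind_andb, <- div_pow_succ. f_equal.
      replace (p + S j <=? S L) with (p + j <=? L)
        by (destruct (Nat.leb_spec (p + j) L), (Nat.leb_spec (p + S j) (S L)); auto; lia).
      destruct ((r / b ^ S j) mod b ^ p =? W) eqn:Eq; [|now rewrite !andb_false_r].
      apply Nat.eqb_eq in Eq. rewrite no_new_occ_succ by exact Eq.
      now destruct (p + j <=? L), (r mod b ^ p =? W), no_new_occ. }
  rewrite sumR_scal, IH. cbn [has_occ].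
  destruct (Nat.leb_spec p (S L)).
  - destruct (r mod b ^ p =? W), (has_occ L (r / b)); simpl; lra.
  - destruct (has_occ L (r / b)) eqn:Eh; [apply (has_occ_length b p W Hb) in Eh; lia|].
    simpl. lra.
Qed.

End LastOccurrence.

End Splits.

Lemma INR_pos m : (1 <= m)%nat -> 0 < INR m.
Proof. intros. apply lt_0_INR. lia. Qed.

Lemma INR_pow_pos b n : (1 <= b)%nat -> 0 < INR b ^ n.
Proof. intros. apply pow_lt, INR_pos; lia. Qed.

Section Kac.

Variables b p W : nat.
Hypothesis Hb : (2 <= b)%nat.
Hypothesis Hp : (1 <= p)%nat.
Hypothesis HW : (W < b ^ p)%nat.

Local Notation ends_with := (ends_with b p W).
Local Notation has_occ := (has_occ b p W).

Let b_pos : (1 <= b)%nat. Proof. lia. Qed.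

Definition avoid_count (L : nat) : R := sumR (fun r => ind (negb (has_occ L r))) (b ^ L).

Definition avoid_density (L : nat) : R := avoid_count L / INR b ^ L.

Lemma avoid_count_succ L : avoid_count (S L) <= INR b * avoid_count L.
Proof.
  unfold avoid_count. rewrite Nat.pow_succ_r', Nat.mul_comm, sumR_blocks, <- sumR_scal.
  apply sumR_le. intros x _.
  rewrite <- sumR_const. apply sumR_le. intros y Hy.
  cbn [has_occ]. replace ((x * b + y) / b)%nat with x.
  - destruct (has_occ L x); simpl; [lra | apply ind_le1].
  - rewrite Nat.div_add_l, Nat.div_small by lia. lia.
Qed.

Lemma avoid_count_add_p n : avoid_count (n + p) <= (INR (b ^ p) - 1) * avoid_count n.
Proof.
  unfold avoid_count. rewrite Nat.pow_add_r, sumR_blocks, <- sumR_scal.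
  apply sumR_le. intros x _.
  assert (Hs : sumR (fun y => ind (negb (y =? W))) (b ^ p) = INR (b ^ p) - 1).
  { rewrite (sumR_ext _ (fun y => 1 + (-1) * ind (y =? W))) by (intros; now destruct (_ =? _); simpl; lra).
    rewrite sumR_plus, sumR_scal, sumR_const, sumR_ind_eq by auto. lra. }
  rewrite <- Hs, Rmult_comm, <- sumR_scal. apply sumR_le. intros y Hy.
  destruct (has_occ n x) eqn:E1.
  - rewrite (has_occ_concat b p W Hb p n x y Hy E1). simpl. lra.
  - destruct (Nat.eqb_spec y W) as [->|].
    + replace (n + p)%nat with (S (n + p - 1)) by lia. cbn [has_occ].
      replace (S (n + p - 1)) with (n + p)%nat by lia.
      replace (p <=? n + p) with true by (symmetry; apply Nat.leb_le; lia).
      rewrite mod_concat, Nat.eqb_refl, andb_true_r, orb_true_r by lia. simpl. lra.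
    + pose proof (ind_le1 (negb (has_occ (n + p) (x * b ^ p + y)))). simpl. lra.
Qed.

Lemma avoid_count_mul t : avoid_count (t * p) <= (INR (b ^ p) - 1) ^ t.
Proof.
  induction t as [|t IH]; [unfold avoid_count; simpl; lra|].
  replace (S t * p)%nat with (t * p + p)%nat by lia.
  eapply Rle_trans; [apply avoid_count_add_p|].
  assert (1 <= INR (b ^ p)) by (apply (le_INR 1), pow_ge_1; lia).
  simpl. apply Rmult_le_compat_l; lra.
Qed.

Lemma avoid_density_nonneg L : 0 <= avoid_density L.
Proof.
  apply Rmult_le_pos; [apply sumR_nonneg; intros; apply ind_nonneg|].
  left. apply Rinv_0_lt_compat, INR_pow_pos; lia.
Qed.

Lemma avoid_density_antitone L L' : (L <= L')%nat -> avoid_density L' <= avoid_density L.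
Proof.
  induction 1 as [|L' _ IH]; [lra|]. eapply Rle_trans; [|exact IH].
  unfold avoid_density. pose proof (avoid_count_succ L').
  pose proof (INR_pow_pos b L' b_pos). pose proof (INR_pos b b_pos).
  apply Rle_trans with (INR b * avoid_count L' / (INR b * INR b ^ L')).
  - simpl pow. unfold Rdiv. apply Rmult_le_compat_r; [left; apply Rinv_0_lt_compat; nra | lra].
  - right. field. lra.
Qed.

Lemma avoid_density_mul t : avoid_density (t * p) <= (1 - / INR b ^ p) ^ t.
Proof.
  pose proof (INR_pow_pos b p b_pos).
  replace (1 - / INR b ^ p) with ((INR b ^ p - 1) / INR b ^ p) by (field; lra).
  unfold avoid_density, Rdiv. rewrite Rpow_mult_distr, pow_inv, Nat.mul_comm, pow_mult.
  apply Rmult_le_compat_r; [left; apply Rinv_0_lt_compat, pow_lt; lra|].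
  rewrite <- pow_INR, Nat.mul_comm. apply avoid_count_mul.
Qed.

Lemma avoid_density_cv : Un_cv avoid_density 0.
Proof.
  intros eps Heps.
  pose proof (INR_pow_pos b p b_pos).
  assert (1 <= INR b ^ p) by (rewrite <- pow_INR; apply (le_INR 1), pow_ge_1; lia).
  assert (Hx : Rabs (1 - / INR b ^ p) < 1).
  { assert (0 < / INR b ^ p <= 1).
    { split; [now apply Rinv_0_lt_compat|]. rewrite <- Rinv_1. apply Rinv_le_contravar; lra. }
    rewrite Rabs_right; lra. }
  destruct (pow_lt_1_zero _ Hx (eps / 2) ltac:(lra)) as [N HN].
  exists (N * p)%nat. intros L HL. unfold Rdist. rewrite Rminus_0_r, Rabs_right
    by (apply Rle_ge, avoid_density_nonneg).
  eapply Rle_lt_trans; [apply avoid_density_antitone, HL|].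
  eapply Rle_lt_trans; [apply avoid_density_mul|].
  specialize (HN N ltac:(lia)). pose proof (Rle_abs ((1 - / INR b ^ p) ^ N)). lra.
Qed.

Section TailSeries.

Variable V : nat.
Hypothesis HV : ends_with V = true.

Definition tail_count (j : nat) : R := sumR (fun y => ind (no_new_occ b p W V j y)) (b ^ j).

Lemma has_occ_count L :
  sumR (fun r => ind (has_occ L r)) (b ^ L)
  = sumR (fun j => ind (p + j <=? L) * INR (b ^ (L - j - p)) * tail_count j) L.
Proof.
  rewrite (sumR_ext _ (fun r => sumR (fun j => ind ((p + j <=? L) && ((r / b ^ j) mod b ^ p =? W)
        && no_new_occ b p W V j (r mod b ^ j))) L))
    by (intros; symmetry; now apply has_occ_split).
  rewrite sumR_swap. apply sumR_ext. intros j Hj.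
  replace (b ^ L)%nat with (b ^ (L - j) * b ^ j)%nat by (rewrite <- Nat.pow_add_r; f_equal; lia).
  rewrite sumR_blocks.
  rewrite (sumR_ext _ (fun x => ind (p + j <=? L) * tail_count j * ind (x mod b ^ p =? W))).
  2:{ intros x _. unfold tail_count. rewrite <- sumR_scal, sumR_mult_r. apply sumR_ext. intros y Hy.
      rewrite div_concat, mod_concat, !ind_andb by lia. lra. }
  rewrite sumR_scal.
  destruct (Nat.leb_spec (p + j) L); simpl ind; [|lra].
  replace (b ^ (L - j))%nat with (b ^ (L - j - p) * b ^ p)%nat by (rewrite <- Nat.pow_add_r; f_equal; lia).
  rewrite sumR_ind_mod_eq by exact HW. lra.
Qed.

Definition tail_series (n : nat) : R := sumR (fun j => tail_count j / INR b ^ j) n.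

Lemma tail_count_nonneg j : 0 <= tail_count j.
Proof. apply sumR_nonneg. intros. apply ind_nonneg. Qed.

Lemma tail_series_eq n : tail_series n = INR b ^ p * (1 - avoid_density (n + p - 1)).
Proof.
  set (L := (n + p - 1)%nat).
  assert (HT : avoid_count L + sumR (fun r => ind (has_occ L r)) (b ^ L) = INR (b ^ L)).
  { unfold avoid_count. rewrite <- sumR_plus, (sumR_ext _ (fun _ => 1)), sumR_const; [lra|].
    intros. now destruct (has_occ L _); simpl; lra. }
  rewrite has_occ_count in HT.
  replace L with (n + (p - 1))%nat in HT at 2 by (unfold L; lia).
  rewrite sumR_add_range in HT.
  rewrite (sumR_ext (fun i => _ * _ * tail_count (n + i)) (fun _ => 0)), sumR_const in HT.
  2:{ intros i Hi. destruct (Nat.leb_spec (p + (n + i)) L); [unfold L in *; lia | simpl; lra]. }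
  pose proof (INR_pow_pos b L b_pos). pose proof (INR_pow_pos b p b_pos).
  rewrite (sumR_ext _ (fun j => INR b ^ L / INR b ^ p * (tail_count j / INR b ^ j))), sumR_scal in HT.
  2:{ intros j Hj. destruct (Nat.leb_spec (p + j) L); [|unfold L in *; lia].
      rewrite pow_INR. replace L with ((L - j - p) + j + p)%nat at 2 by lia.
      rewrite !pow_add. pose proof (INR_pow_pos b j b_pos). simpl ind. field. lra. }
  fold (tail_series n) in HT. rewrite pow_INR in HT.
  unfold avoid_density. fold L.
  apply (Rmult_eq_reg_l (INR b ^ L / INR b ^ p)); [|apply Rgt_not_eq, Rdiv_lt_0_compat; auto].
  replace (INR b ^ L / INR b ^ p * (INR b ^ p * (1 - avoid_count L / INR b ^ L)))
    with (INR b ^ L - avoid_count L) by (field; lra).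
  simpl INR in HT. lra.
Qed.

End TailSeries.

End Kac.

Definition log_step (m : nat) : R := ln (INR (S m)) - ln (INR m).

Lemma ln_le_sub1 y : 0 < y -> ln y <= y - 1.
Proof. intros Hy. pose proof (exp_ineq1_le (ln y)). rewrite exp_ln in H by exact Hy. lra. Qed.

Lemma log_step_le_inv q : (1 <= q)%nat -> log_step q <= / INR q.
Proof.
  intros Hq. pose proof (INR_pos q Hq). unfold log_step. rewrite S_INR.
  replace (ln (INR q + 1) - ln (INR q)) with (ln ((INR q + 1) / INR q))
    by (rewrite ln_div; lra).
  eapply Rle_trans; [apply ln_le_sub1, Rdiv_lt_0_compat; lra|]. right. field. lra.
Qed.

Lemma inv_succ_le_log_step q : (1 <= q)%nat -> / INR (S q) <= log_step q.
Proof.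
  intros Hq. pose proof (INR_pos q Hq). unfold log_step. rewrite S_INR.
  replace (ln (INR q + 1) - ln (INR q)) with (- ln (INR q / (INR q + 1)))
    by (rewrite ln_div; lra).
  pose proof (ln_le_sub1 (INR q / (INR q + 1)) ltac:(apply Rdiv_lt_0_compat; lra)).
  replace (INR q / (INR q + 1) - 1) with (- / (INR q + 1)) in H0 by (field; lra). lra.
Qed.

Lemma log_step_nonneg q : (1 <= q)%nat -> 0 <= log_step q.
Proof.
  intros Hq. pose proof (inv_succ_le_log_step q Hq).
  pose proof (Rinv_0_lt_compat _ (INR_pos (S q) ltac:(lia))). lra.
Qed.

Lemma log_step_1 : log_step 1 = ln 2.
Proof. unfold log_step. simpl INR. rewrite ln_1. replace (1 + 1) with 2 by lra. lra. Qed.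

Lemma sumR_log_step x c : sumR (fun r => log_step (x + r)) c = ln (INR (x + c)) - ln (INR x).
Proof.
  induction c as [|c IH]; simpl sumR; [rewrite Nat.add_0_r; lra|].
  rewrite IH. unfold log_step. rewrite Nat.add_succ_r. lra.
Qed.

Lemma sumR_log_step_block q c : (1 <= q)%nat -> (1 <= c)%nat ->
  sumR (fun r => log_step (q * c + r)) c = log_step q.
Proof.
  intros Hq Hc. rewrite sumR_log_step. unfold log_step.
  replace (q * c + c)%nat with (S q * c)%nat by lia.
  pose proof (INR_pos q Hq). pose proof (INR_pos c Hc).
  rewrite !mult_INR, !ln_mult by (try apply INR_pos; lia). lra.
Qed.

Lemma exp_mult_INR n x : exp (INR n * x) = exp x ^ n.
Proof.
  induction n as [|n IH]; [simpl; rewrite Rmult_0_l; apply exp_0|].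
  rewrite S_INR, Rmult_plus_distr_r, Rmult_1_l, exp_plus, IH. simpl. lra.
Qed.

Lemma two_thirds_le_ln2 : 2 / 3 <= ln 2.
Proof.
  assert (H1 : exp (1 / 30) <= 30 / 29).
  { pose proof (exp_ineq1_le (- (1 / 30))). pose proof (exp_pos (1 / 30)).
    assert (exp (- (1 / 30)) * exp (1 / 30) = 1) by (rewrite <- exp_plus, <- exp_0; f_equal; lra).
    nra. }
  assert (H2 : exp (2 / 3) = exp (1 / 30) ^ 20).
  { rewrite <- exp_mult_INR. f_equal. simpl. lra. }
  assert (H3 : exp (1 / 30) ^ 20 <= (30 / 29) ^ 20) by (apply pow_incr; split; [left; apply exp_pos | exact H1]).
  assert (H4 : (30 / 29) ^ 20 < 2) by (simpl; lra).
  rewrite <- (ln_exp (2 / 3)). left. apply ln_increasing; [apply exp_pos | lra].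
Qed.

Lemma ln2_le_five_sixths : ln 2 <= 5 / 6.
Proof.
  assert (H1 : 17 / 12 <= exp (5 / 12)) by (pose proof (exp_ineq1_le (5 / 12)); lra).
  assert (H2 : exp (5 / 6) = exp (5 / 12) * exp (5 / 12)) by (rewrite <- exp_plus; f_equal; lra).
  rewrite <- (ln_exp (5 / 6)). left. apply ln_increasing; nra.
Qed.

Lemma sumR_digit_window (f : nat -> R) b s l N : (1 <= b)%nat -> (s + l <= N)%nat ->
  sumR (fun m => f ((m / b ^ s) mod b ^ l)%nat) (b ^ N) = INR (b ^ (N - l)) * sumR f (b ^ l).
Proof.
  intros Hb H.
  replace (b ^ N)%nat with (b ^ (N - s) * b ^ s)%nat by (rewrite <- Nat.pow_add_r; f_equal; lia).
  rewrite sumR_blocks.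
  rewrite (sumR_ext _ (fun q => INR (b ^ s) * f (q mod b ^ l)%nat)), sumR_scal.
  2:{ intros q _. rewrite <- sumR_const. apply sumR_ext. intros r Hr. now rewrite div_concat. }
  replace (b ^ (N - s))%nat with (b ^ (N - s - l) * b ^ l)%nat by (rewrite <- Nat.pow_add_r; f_equal; lia).
  rewrite sumR_blocks, (sumR_ext _ (fun _ => sumR f (b ^ l))), sumR_const.
  2:{ intros x _. apply sumR_ext. intros y Hy. now rewrite mod_concat. }
  rewrite <- Rmult_assoc, <- mult_INR, <- Nat.pow_add_r.
  now replace (s + (N - s - l))%nat with (N - l)%nat by lia.
Qed.

Section LogMass.

Variables b p W k : nat.
Hypothesis Hb : (2 <= b)%nat.
Hypothesis Hk : (1 <= k)%nat.

Local Notation occs := (occs b p W).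
Local Notation has_occ := (has_occ b p W).
Local Notation kth_end := (kth_end b p W).

Let b_pos : (1 <= b)%nat. Proof. lia. Qed.

Definition log_mass (n : nat) : R := sumR (fun q => ind (kth_end k q) * log_step q) (b ^ n).

Definition log_deficit (n : nat) : R :=
  sumR (fun i => ind (occs (b ^ n + i) <? k) * log_step (b ^ n + i)) (b ^ S n - b ^ n).

Lemma sumR_log_step_occs_ge n :
  sumR (fun m => ind (k <=? occs m) * log_step m) (b ^ n) = sumR (fun t => log_mass (S t)) n.
Proof.
  rewrite (sumR_ext _ (fun m => sumR (fun j => ind (kth_end k (m / b ^ j)) * log_step m) n)).
  2:{ intros m Hm. rewrite <- sumR_mult_r. f_equal. symmetry. now apply occs_ge_split. }
  rewrite sumR_swap, <- sumR_rev. apply sumR_ext. intros j Hj.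
  unfold log_mass. replace (b ^ n)%nat with (b ^ (n - j) * b ^ j)%nat
    by (rewrite <- Nat.pow_add_r; f_equal; lia).
  rewrite sumR_blocks. apply sumR_ext. intros q Hq.
  rewrite (sumR_ext _ (fun r => ind (kth_end k q) * log_step (q * b ^ j + r)))
    by (intros; now rewrite div_concat).
  rewrite sumR_scal. destruct (kth_end k q) eqn:E; simpl ind; [|lra].
  rewrite sumR_log_step_block; [lra | exact (kth_end_pos b p W Hb k q E) | apply pow_ge_1; lia].
Qed.

Lemma log_mass_succ n : log_mass (S n) = ln (INR b) - log_deficit n.
Proof.
  pose proof (sumR_log_step_occs_ge (S n)) as H1. pose proof (sumR_log_step_occs_ge n) as H0.
  simpl sumR in H1. rewrite <- H0 in H1.
  assert (Hle : (b ^ n <= b ^ S n)%nat) by (apply Nat.pow_le_mono_r; lia).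
  replace (b ^ S n)%nat with (b ^ n + (b ^ S n - b ^ n))%nat in H1 at 1 by lia.
  rewrite sumR_add_range in H1.
  enough (sumR (fun i => ind (k <=? occs (b ^ n + i)) * log_step (b ^ n + i)) (b ^ S n - b ^ n)
     = ln (INR b) - log_deficit n) by lra.
  unfold log_deficit.
  rewrite (sumR_ext _ (fun i => log_step (b ^ n + i) + (-1) * (ind (occs (b ^ n + i) <? k) * log_step (b ^ n + i)))).
  2:{ intros i _. destruct (Nat.leb_spec k (occs (b ^ n + i))), (Nat.ltb_spec (occs (b ^ n + i)) k);
      simpl; lia || lra. }
  rewrite sumR_plus, sumR_scal, sumR_log_step.
  replace (b ^ n + (b ^ S n - b ^ n))%nat with (b ^ S n)%nat by lia.
  rewrite !pow_INR. simpl pow. rewrite ln_mult; [lra | apply INR_pos; lia | apply INR_pow_pos; lia].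
Qed.

Lemma log_mass_le n : log_mass n <= ln (INR b).
Proof.
  assert (0 < ln (INR b)) by (rewrite <- ln_1; apply ln_increasing; [lra | apply (lt_INR 1); lia]).
  destruct n as [|n].
  - unfold log_mass. simpl. unfold kth_end. rewrite (ends_with_0 b p W Hb). simpl. lra.
  - rewrite log_mass_succ.
    enough (0 <= log_deficit n) by lra.
    apply sumR_nonneg. intros. apply Rmult_le_pos; [apply ind_nonneg | apply log_step_nonneg].
    pose proof (pow_ge_1 b b_pos n). lia.
Qed.

Lemma occs_lt_window l m : (b ^ (k * l) <= m)%nat ->
  ind (occs m <? k) <= sumR (fun i => ind (negb (has_occ l ((m / b ^ (i * l)) mod b ^ l)))) k.
Proof.
  clear Hk. revert m. induction k as [|k' IH]; intros m Hm; [destruct (Nat.ltb_spec (occs m) 0); [lia | simpl; lra]|].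
  rewrite sumR_succ_l, Nat.mul_0_l, Nat.pow_0_r, Nat.div_1_r.
  set (m' := (m / b ^ l)%nat).
  assert (Hbl : (1 <= b ^ l)%nat) by (apply pow_ge_1; lia).
  assert (Hm' : (b ^ (k' * l) <= m')%nat).
  { apply Nat.div_le_lower_bound; [lia|]. rewrite <- Nat.pow_add_r. now replace (l + k' * l)%nat with (S k' * l)%nat by lia. }
  rewrite (sumR_ext (fun i => ind (negb (has_occ l ((m / b ^ (S i * l)) mod b ^ l))))
                    (fun i => ind (negb (has_occ l ((m' / b ^ (i * l)) mod b ^ l))))).
  2:{ intros i _. unfold m'. rewrite Nat.Div0.div_div, <- Nat.pow_add_r. now replace (l + i * l)%nat with (S i * l)%nat by lia. }
  specialize (IH m' Hm').
  assert (Hr : (m mod b ^ l < b ^ l)%nat) by (apply Nat.mod_upper_bound; lia).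
  pose proof (occs_concat_ge b p W Hb m' (m mod b ^ l) l ltac:(pose proof (pow_ge_1 b b_pos (k' * l)); lia) Hr) as Hmono.
  replace (m' * b ^ l + m mod b ^ l)%nat with m in Hmono by (unfold m'; rewrite Nat.mul_comm; apply Nat.div_mod_eq).
  destruct (has_occ l (m mod b ^ l)); cbn [Nat.b2n negb ind] in *.
  - destruct (Nat.ltb_spec (occs m) (S k')), (Nat.ltb_spec (occs m') k'); simpl in *; lia || lra.
  - pose proof (ind_le1 (occs m <? S k')).
    assert (0 <= sumR (fun i => ind (negb (has_occ l ((m' / b ^ (i * l)) mod b ^ l)))) k')
      by (apply sumR_nonneg; intros; apply ind_nonneg). lra.
Qed.

Lemma log_deficit_le l n : (k * l <= n)%nat -> log_deficit n <= INR k * INR b * avoid_density b p W l.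
Proof.
  intros Hkl.
  set (G := fun m => sumR (fun i => ind (negb (has_occ l ((m / b ^ (i * l)) mod b ^ l)))) k).
  assert (HG : forall m, 0 <= G m) by (intros; apply sumR_nonneg; intros; apply ind_nonneg).
  pose proof (pow_ge_1 b b_pos n).
  pose proof (INR_pow_pos b n b_pos) as HBn.
  assert (Hle : (b ^ n <= b ^ S n)%nat) by (apply Nat.pow_le_mono_r; lia).
  apply Rle_trans with (/ INR b ^ n * sumR (fun i => G (b ^ n + i)%nat) (b ^ S n - b ^ n)).
  { unfold log_deficit. rewrite <- sumR_scal. apply sumR_le. intros i Hi.
    rewrite Rmult_comm. apply Rmult_le_compat; [apply log_step_nonneg; lia | apply ind_nonneg | |].
    - eapply Rle_trans; [apply log_step_le_inv; lia|]. apply Rinv_le_contravar; [exact HBn|].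
      rewrite <- pow_INR. apply le_INR. lia.
    - apply occs_lt_window. pose proof (Nat.pow_le_mono_r b (k * l) n ltac:(lia) Hkl). lia. }
  apply Rle_trans with (/ INR b ^ n * sumR G (b ^ S n)).
  { apply Rmult_le_compat_l; [left; now apply Rinv_0_lt_compat|].
    replace (b ^ S n)%nat with (b ^ n + (b ^ S n - b ^ n))%nat at 2 by lia.
    rewrite sumR_add_range. assert (0 <= sumR G (b ^ n)) by (apply sumR_nonneg; auto). lra. }
  unfold G. rewrite sumR_swap.
  rewrite (sumR_ext _ (fun i => INR (b ^ (S n - l)) * avoid_count b p W l)), sumR_const.
  2:{ intros i Hi. apply (sumR_digit_window (fun y => ind (negb (has_occ l y)))); [lia|]. nia. }
  unfold avoid_density. assert (Hl : (l <= n)%nat) by nia.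
  rewrite pow_INR. replace (S n - l)%nat with (S (n - l)) by lia.
  replace (INR b ^ n) with (INR b ^ (n - l) * INR b ^ l) by (rewrite <- pow_add; f_equal; lia).
  pose proof (INR_pow_pos b l b_pos). pose proof (INR_pow_pos b (n - l) b_pos).
  simpl pow. right. field. split; lra.
Qed.

End LogMass.

Definition harmonic_term (b p W k m : nat) : R := ind (occs b p W m =? k) * / INR m.

Section HarmonicSplit.

Variables b p W k V : nat.
Hypothesis Hb : (2 <= b)%nat.
Hypothesis Hk : (1 <= k)%nat.
Hypothesis HV : ends_with b p W V = true.

Local Notation kth_end := (kth_end b p W).
Local Notation no_new_occ := (no_new_occ b p W V).
Local Notation tail_count := (tail_count b p W V).

Let b_pos : (1 <= b)%nat. Proof. lia. Qed.

Definition block_harmonic (j q : nat) : R :=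
  sumR (fun r => ind (no_new_occ j r) * / INR (q * b ^ j + r)) (b ^ j).

Definition inv_sum (n : nat) : R := sumR (fun q => ind (kth_end k q) * / INR q) (b ^ n).

Definition inv_succ_sum (n : nat) : R := sumR (fun q => ind (kth_end k q) * / INR (S q)) (b ^ n).

Lemma harmonic_split n :
  sumR (harmonic_term b p W k) (b ^ n) =
  sumR (fun j => sumR (fun q => ind (kth_end k q) * block_harmonic j q) (b ^ (n - j))) n.
Proof.
  unfold harmonic_term.
  rewrite (sumR_ext _ (fun m => sumR (fun j => ind (kth_end k (m / b ^ j) && no_new_occ j (m mod b ^ j)) * / INR m) n)).
  2:{ intros m Hm. rewrite <- sumR_mult_r. f_equal. symmetry. now apply occs_eq_split. }
  rewrite sumR_swap. apply sumR_ext. intros j Hj.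
  replace (b ^ n)%nat with (b ^ (n - j) * b ^ j)%nat by (rewrite <- Nat.pow_add_r; f_equal; lia).
  rewrite sumR_blocks. apply sumR_ext. intros q Hq.
  unfold block_harmonic. rewrite <- sumR_scal. apply sumR_ext. intros r Hr.
  rewrite div_concat, mod_concat, ind_andb by lia. lra.
Qed.

Lemma block_harmonic_bounds j q : (1 <= q)%nat ->
  tail_count j / INR b ^ j * / INR (S q) <= block_harmonic j q <= tail_count j / INR b ^ j * / INR q.
Proof.
  intros Hq. unfold block_harmonic, tail_count.
  pose proof (INR_pow_pos b j b_pos). pose proof (INR_pos q Hq).
  pose proof (pow_ge_1 b b_pos j).
  assert (Hfactor : forall c, sumR (fun r => ind (no_new_occ j r)) (b ^ j) / INR b ^ j * / c
                    = sumR (fun r => ind (no_new_occ j r) * / (INR b ^ j * c)) (b ^ j)).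
  { intros c. rewrite <- sumR_mult_r, Rinv_mult. unfold Rdiv. ring. }
  rewrite !Hfactor. split; apply sumR_le; intros r Hr; apply Rmult_le_compat_l; try apply ind_nonneg;
    apply Rinv_le_contravar; rewrite <- ?pow_INR, <- ?mult_INR; try (apply INR_pos; nia);
    apply le_INR; nia.
Qed.

Lemma kth_end_block_nonneg j q : 0 <= ind (kth_end k q) * block_harmonic j q.
Proof.
  destruct (kth_end k q) eqn:E; simpl ind; [|lra].
  pose proof (block_harmonic_bounds j q (kth_end_pos b p W Hb k q E)) as [Hlo _].
  enough (0 <= tail_count j / INR b ^ j * / INR (S q)) by lra.
  apply Rmult_le_pos; [apply Rmult_le_pos|]; [apply tail_count_nonneg | | ];
    left; apply Rinv_0_lt_compat; [apply INR_pow_pos | apply INR_pos]; lia.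
Qed.

Lemma harmonic_sum_le n : sumR (harmonic_term b p W k) (b ^ n) <= tail_series b p W V n * inv_sum n.
Proof.
  rewrite harmonic_split. unfold tail_series. rewrite sumR_mult_r. apply sumR_le. intros j Hj.
  unfold inv_sum. rewrite <- sumR_scal.
  apply Rle_trans with (sumR (fun q => tail_count j / INR b ^ j * (ind (kth_end k q) * / INR q)) (b ^ (n - j))).
  - apply sumR_le. intros q _. destruct (kth_end k q) eqn:E; simpl ind; [|lra].
    pose proof (block_harmonic_bounds j q (kth_end_pos b p W Hb k q E)). lra.
  - apply sumR_le_length; [|apply Nat.pow_le_mono_r; lia]. intros q.
    apply Rmult_le_pos; [apply Rmult_le_pos; [apply tail_count_nonneg | left; apply Rinv_0_lt_compat, INR_pow_pos; lia]|].
    destruct (kth_end k q) eqn:E; simpl ind; [|lra].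
    rewrite Rmult_1_l. left. apply Rinv_0_lt_compat, INR_pos, (kth_end_pos b p W Hb k q E).
Qed.

Lemma harmonic_sum_ge N n :
  tail_series b p W V N * inv_succ_sum n <= sumR (harmonic_term b p W k) (b ^ (N + n)).
Proof.
  rewrite harmonic_split, sumR_add_range.
  enough (tail_series b p W V N * inv_succ_sum n
          <= sumR (fun j => sumR (fun q => ind (kth_end k q) * block_harmonic j q) (b ^ (N + n - j))) N).
  { enough (0 <= sumR (fun i => sumR (fun q => ind (kth_end k q) * block_harmonic (N + i) q)
                                   (b ^ (N + n - (N + i)))) n) by lra.
    apply sumR_nonneg. intros. apply sumR_nonneg. intros. apply kth_end_block_nonneg. }
  unfold tail_series. rewrite sumR_mult_r. apply sumR_le. intros j Hj.
  unfold inv_succ_sum. rewrite <- sumR_scal.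
  apply Rle_trans with (sumR (fun q => ind (kth_end k q) * block_harmonic j q) (b ^ n)).
  - apply sumR_le. intros q _. destruct (kth_end k q) eqn:E; simpl ind; [|lra].
    pose proof (block_harmonic_bounds j q (kth_end_pos b p W Hb k q E)). lra.
  - apply sumR_le_length; [intros; apply kth_end_block_nonneg | apply Nat.pow_le_mono_r; lia].
Qed.

End HarmonicSplit.

Definition gap_bounded (t : nat -> R) : Prop :=
  forall q, (1 <= q)%nat -> 0 <= t q <= / INR q - / INR (S q).

Lemma inv_gap_nonneg q : (1 <= q)%nat -> 0 <= / INR q - / INR (S q).
Proof.
  intros Hq. enough (/ INR (S q) <= / INR q) by lra.
  apply Rinv_le_contravar; [apply INR_pos; lia | apply le_INR; lia].
Qed.

Lemma sumR_inv_gap_tail M N : (1 <= M)%nat ->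
  sumR (fun q => ind (M <=? q) * (/ INR q - / INR (S q))) N + / INR (Nat.max N M) = / INR M.
Proof.
  intros HM. induction N as [|N IH]; [simpl; lra|]. cbn [sumR].
  destruct (Nat.leb_spec M N).
  - rewrite Nat.max_l in IH by lia. rewrite Nat.max_l by lia. simpl ind. lra.
  - rewrite Nat.max_r in IH by lia. rewrite Nat.max_r by lia. simpl ind. lra.
Qed.

Lemma sumR_gap_bounded_le (P : nat -> bool) (t : nat -> R) M N : (1 <= M)%nat ->
  (forall q, P q = true -> (M <= q)%nat) -> gap_bounded t ->
  sumR (fun q => ind (P q) * t q) N <= / INR M.
Proof.
  intros HM HP Ht. pose proof (sumR_inv_gap_tail M N HM).
  pose proof (Rinv_0_lt_compat _ (INR_pos (Nat.max N M) ltac:(lia))).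
  enough (sumR (fun q => ind (P q) * t q) N <= sumR (fun q => ind (M <=? q) * (/ INR q - / INR (S q))) N)
    by lra.
  apply sumR_le. intros q _. destruct (P q) eqn:E.
  - apply HP in E. destruct (Nat.leb_spec M q); [|lia]. simpl ind. specialize (Ht q ltac:(lia)). lra.
  - destruct (Nat.leb_spec M q); simpl ind; [pose proof (inv_gap_nonneg q ltac:(lia)) |]; lra.
Qed.

Definition delta (b k : nat) : R := (INR b - 1) / INR b ^ (Nat.max k 2 - 1).

Section ErrorBound.

Variables b p W k : nat.
Hypothesis Hb : (2 <= b)%nat.
Hypothesis Hp : (1 <= p)%nat.
Hypothesis Hk : (1 <= k)%nat.
Hypothesis HW : (W < b ^ p)%nat.

Local Notation kth_end := (kth_end b p W).

Lemma kth_end_lower q : kth_end k q = true -> (b ^ (p + k - 2) <= q)%nat.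
Proof.
  intros [_ H]%andb_prop. apply Nat.eqb_eq in H.
  pose proof (occs_lower_bound b p W Hb q (k - 1) ltac:(lia)).
  eapply Nat.le_trans; [|eassumption]. apply Nat.pow_le_mono_r; lia.
Qed.

Lemma sumR_kth_end_le_delta_long (t : nat -> R) N : (3 <= p + k)%nat -> gap_bounded t ->
  sumR (fun q => ind (kth_end k q) * t q) N <= delta b k.
Proof.
  intros Hpk Ht. pose proof (le_INR 2 b Hb) as HB. simpl in HB.
  eapply Rle_trans; [apply (sumR_gap_bounded_le _ _ (b ^ (p + k - 2)) N); auto|].
  - apply pow_ge_1; lia.
  - exact kth_end_lower.
  - unfold delta. rewrite pow_INR. pose proof (INR_pow_pos b (Nat.max k 2 - 1) ltac:(lia)).
    apply Rle_trans with (/ INR b ^ (Nat.max k 2 - 1)).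
    + apply Rinv_le_contravar; [assumption | apply Rle_pow; lia || lra].
    + unfold Rdiv. rewrite <- (Rmult_1_l (/ INR b ^ _)) at 1.
      apply Rmult_le_compat_r; [left; now apply Rinv_0_lt_compat | lra].
Qed.

End ErrorBound.

Section OneDigitWord.

Variables b W : nat.
Hypothesis Hb : (2 <= b)%nat.
Hypothesis HW : (W < b)%nat.

Local Notation kth_end := (kth_end b 1 W 1).

Lemma kth_end_one_digit_small q : kth_end q = true -> (q < b)%nat -> q = W.
Proof.
  intros [[_ E]%andb_prop _]%andb_prop Hq. apply Nat.eqb_eq in E.
  now rewrite Nat.pow_1_r, Nat.mod_small in E.
Qed.

Lemma sumR_kth_end_one_digit_le (t : nat -> R) N : gap_bounded t ->
  sumR (fun q => ind (kth_end q) * t q) N <= ind (kth_end W) * t W + / INR b.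
Proof.
  intros Ht.
  assert (HtW : 0 <= ind (kth_end W) * t W).
  { destruct (kth_end W) eqn:E; simpl ind; [|lra].
    pose proof (Ht W (kth_end_pos b 1 W Hb 1 W E)). lra. }
  apply Rle_trans with (sumR (fun q => ind (q =? W) * (ind (kth_end W) * t W)
                                      + ind (kth_end q && (b <=? q)) * t q) N).
  - apply sumR_le. intros q _. pose proof (ind_nonneg (q =? W)).
    destruct (kth_end q) eqn:E; simpl andb; simpl ind; [|nra].
    destruct (Nat.leb_spec b q); simpl ind; [pose proof (Ht q (kth_end_pos b 1 W Hb 1 q E)); nra|].
    assert (q = W) as -> by now apply kth_end_one_digit_small.
    rewrite Nat.eqb_refl, E. simpl. lra.
  - rewrite sumR_plus, <- sumR_mult_r. pose proof (sumR_ind_eq_le1 N W).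
    enough (sumR (fun q => ind (kth_end q && (b <=? q)) * t q) N <= / INR b) by nra.
    apply sumR_gap_bounded_le; [lia | | exact Ht].
    intros q [_ Hq]%andb_prop. now apply Nat.leb_le.
Qed.

End OneDigitWord.

Lemma gap_bounded_le_third (t : nat -> R) q : gap_bounded t -> t 1%nat <= 1 / 3 -> (1 <= q)%nat ->
  t q <= 1 / 3.
Proof.
  intros Ht Ht1 Hq. destruct (Nat.eq_dec q 1) as [->|Hq1]; [exact Ht1|].
  pose proof (Ht q Hq). pose proof (le_INR 2 q ltac:(lia)) as Hq2. simpl in Hq2.
  assert (/ INR q - / INR (S q) = / (INR q * (INR q + 1))) by (rewrite S_INR; field; lra).
  enough (/ (INR q * (INR q + 1)) <= / 6) by lra.
  apply Rinv_le_contravar; nra.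
Qed.

(* Every positive binary numeral starts with the digit 1. *)
Lemma binary_one_kth_end q : kth_end 2 1 1 1 q = true -> q = 1%nat.
Proof.
  assert (Hall : forall m, (1 <= m)%nat -> (1 <= occs 2 1 1 m)%nat).
  { intros m. induction m as [m IH] using lt_wf_ind. intros Hm.
    rewrite occs_div by lia. destruct (Nat.eq_dec m 1) as [->|]; [reflexivity|].
    specialize (IH (m / 2)%nat (Nat.div_lt m 2 ltac:(lia) ltac:(lia)) ltac:(apply Nat.div_le_lower_bound; lia)). lia. }
  intros E. pose proof (kth_end_pos 2 1 1 ltac:(lia) 1 q E).
  apply andb_prop in E as [Eend Eocc]. apply Nat.eqb_eq in Eocc.
  destruct (Nat.eq_dec q 1) as [|Hq1]; [assumption|].
  rewrite occs_div, Eend in Eocc by lia.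
  pose proof (Hall (q / 2)%nat ltac:(apply Nat.div_le_lower_bound; lia)). cbn [Nat.b2n] in Eocc. lia.
Qed.

Lemma sumR_kth_end_le_delta b p W k (t : nat -> R) N : (2 <= b)%nat -> (1 <= p)%nat -> (1 <= k)%nat ->
  (W < b ^ p)%nat -> gap_bounded t -> t 1%nat <= 1 / 3 ->
  sumR (fun q => ind (kth_end b p W k q) * t q) N <= delta b k.
Proof.
  intros Hb Hp Hk HW Ht Ht1.
  destruct (Nat.le_gt_cases 3 (p + k)) as [Hpk|Hpk]; [now apply sumR_kth_end_le_delta_long|].
  replace p with 1%nat in * by lia. replace k with 1%nat in * by lia. rewrite Nat.pow_1_r in HW.
  pose proof (le_INR 2 b Hb) as HB. simpl in HB.
  assert (Hdelta : delta b 1 = 1 - / INR b) by (unfold delta; simpl; field; lra).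
  rewrite Hdelta.
  destruct (Nat.eq_dec b 2) as [->|Hb2]; [destruct (Nat.eq_dec W 1) as [->|HW1]|].
  - apply Rle_trans with (sumR (fun q => ind (q =? 1) * t 1%nat) N).
    + apply sumR_le. intros q _. destruct (kth_end 2 1 1 1 q) eqn:E.
      * rewrite (binary_one_kth_end q E). simpl. lra.
      * simpl ind. specialize (Ht 1%nat ltac:(lia)). pose proof (ind_nonneg (q =? 1)). nra.
    + rewrite <- sumR_mult_r. pose proof (sumR_ind_eq_le1 N 1). pose proof (Ht 1%nat ltac:(lia)).
      simpl INR. nra.
  - eapply Rle_trans; [apply sumR_kth_end_one_digit_le; lia || assumption|].
    assert (W = 0%nat) as -> by lia. unfold kth_end at 1. rewrite ends_with_0 by lia. simpl. lra.
  - (* b = 3, W = 1 is the tight case t 1 + 1/3 <= 2/3; it is why t 1 <= 1/3 is assumed. *)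
    eapply Rle_trans; [apply sumR_kth_end_one_digit_le; lia || assumption|].
    assert (HB3 : 3 <= INR b) by (pose proof (le_INR 3 b ltac:(lia)); simpl in *; lra).
    assert (/ INR b <= 1 / 3) by (apply Rle_trans with (/ 3); [apply Rinv_le_contravar | ]; lra).
    enough (ind (kth_end b 1 W 1 W) * t W <= 1 / 3) by lra.
    destruct (kth_end b 1 W 1 W) eqn:E; simpl ind; [|lra].
    rewrite Rmult_1_l. apply gap_bounded_le_third; auto. exact (kth_end_pos b 1 W Hb 1 W E).
Qed.

Lemma Un_cv_const c : Un_cv (fun _ => c) c.
Proof. intros eps Heps. exists 0%nat. intros. unfold Rdist. rewrite Rminus_diag, Rabs_R0. lra. Qed.

Lemma series_between (a g : nat -> R) (lo hi : R) :
  (forall n, 0 <= a n) -> (forall N, sum_f_R0 a N <= hi) ->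
  Un_cv g lo -> (forall L, exists N, g L <= sum_f_R0 a N) ->
  exists S, is_series a S /\ lo <= S <= hi.
Proof.
  intros Ha Hhi Hg Hlo.
  assert (Hgrow : Un_growing (sum_f_R0 a)) by (intros N; simpl; specialize (Ha (S N)); lra).
  destruct (growing_cv _ Hgrow) as [S HS]; [exists hi; intros x [N ->]; apply Hhi|].
  exists S. split; [now apply is_series_Reals|]. split.
  - eapply Rle_cv_lim; [|exact Hg | apply Un_cv_const].
    intros L. destruct (Hlo L) as [N HN]. pose proof (growing_ineq _ _ Hgrow HS N). lra.
  - exact (Rle_cv_lim Hhi HS (Un_cv_const hi)).
Qed.

Section Bounds.

Variables b p W k : nat.
Hypothesis Hb : (2 <= b)%nat.
Hypothesis Hp : (1 <= p)%nat.
Hypothesis Hk : (1 <= k)%nat.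
Hypothesis HW : (W < b ^ p)%nat.

Local Notation kth_end := (kth_end b p W).
Local Notation avoid_density := (avoid_density b p W).

Let b_pos : (1 <= b)%nat. Proof. lia. Qed.

Definition lead_one_w : nat := (b ^ p + W)%nat.

Lemma ends_with_lead_one_w : ends_with b p W lead_one_w = true.
Proof.
  apply andb_true_intro. split.
  - apply Nat.leb_le. pose proof (Nat.pow_le_mono_r b (p - 1) p ltac:(lia) ltac:(lia)). unfold lead_one_w. lia.
  - apply Nat.eqb_eq. unfold lead_one_w. rewrite <- (Nat.mul_1_l (b ^ p)) at 1. now apply mod_concat.
Qed.

Lemma inv_sum_le n : inv_sum b p W k n <= ln (INR b) + delta b k.
Proof.
  assert (inv_sum b p W k n = log_mass b p W k n
            + sumR (fun q => ind (kth_end k q) * (/ INR q - log_step q)) (b ^ n)) as ->.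
  { unfold inv_sum, log_mass. rewrite <- sumR_plus. apply sumR_ext. intros. lra. }
  pose proof (log_mass_le b p W k Hb Hk n).
  enough (sumR (fun q => ind (kth_end k q) * (/ INR q - log_step q)) (b ^ n) <= delta b k) by lra.
  apply sumR_kth_end_le_delta; auto.
  - intros q Hq. pose proof (log_step_le_inv q Hq). pose proof (inv_succ_le_log_step q Hq). lra.
  - rewrite log_step_1. simpl INR. pose proof two_thirds_le_ln2. lra.
Qed.

Lemma inv_succ_sum_ge l :
  ln (INR b) - delta b k - INR k * INR b * avoid_density l <= inv_succ_sum b p W k (S (k * l)).
Proof.
  set (n := S (k * l)).
  assert (Hsplit : inv_succ_sum b p W k n
          + sumR (fun q => ind (kth_end k q) * (log_step q - / INR (S q))) (b ^ n) = log_mass b p W k n).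
  { unfold inv_succ_sum, log_mass. rewrite <- sumR_plus. apply sumR_ext. intros. lra. }
  unfold n in *. rewrite log_mass_succ in Hsplit by lia.
  pose proof (log_deficit_le b p W k Hb Hk l (k * l) (Nat.le_refl _)).
  enough (sumR (fun q => ind (kth_end k q) * (log_step q - / INR (S q))) (b ^ S (k * l)) <= delta b k) by lra.
  apply sumR_kth_end_le_delta; auto.
  - intros q Hq. pose proof (log_step_le_inv q Hq). pose proof (inv_succ_le_log_step q Hq). lra.
  - rewrite log_step_1. simpl INR. pose proof ln2_le_five_sixths. lra.
Qed.

Lemma harmonic_sum_upper n :
  sumR (harmonic_term b p W k) (b ^ n) <= INR b ^ p * (ln (INR b) + delta b k).
Proof.
  eapply Rle_trans; [exact (harmonic_sum_le b p W k lead_one_w Hb Hk ends_with_lead_one_w n)|].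
  rewrite (tail_series_eq b p W Hb Hp HW lead_one_w ends_with_lead_one_w).
  pose proof (avoid_density_nonneg b p W Hb Hp HW (n + p - 1)). pose proof (INR_pow_pos b p b_pos).
  pose proof (inv_sum_le n).
  assert (0 <= inv_sum b p W k n).
  { apply sumR_nonneg. intros q _. destruct (kth_end k q) eqn:E; simpl ind; [|lra].
    rewrite Rmult_1_l. left. apply Rinv_0_lt_compat, INR_pos, (kth_end_pos b p W Hb k q E). }
  rewrite Rmult_assoc. apply Rmult_le_compat_l; nra.
Qed.

Definition lower_envelope (l : nat) : R :=
  INR b ^ p * (1 - avoid_density (l + (p - 1)))
  * (ln (INR b) - delta b k - INR k * INR b * avoid_density l).

Lemma harmonic_sum_lower l :
  lower_envelope l <= sumR (harmonic_term b p W k) (b ^ (l + S (k * l))).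
Proof.
  eapply Rle_trans; [|apply (harmonic_sum_ge b p W k lead_one_w Hb Hk ends_with_lead_one_w)].
  rewrite (tail_series_eq b p W Hb Hp HW lead_one_w ends_with_lead_one_w). unfold lower_envelope.
  replace (l + (p - 1))%nat with (l + p - 1)%nat by lia.
  apply Rmult_le_compat_l; [|apply inv_succ_sum_ge].
  pose proof (INR_pow_pos b p b_pos).
  pose proof (avoid_density_antitone b p W Hb Hp HW 0 (l + p - 1) ltac:(lia)).
  assert (avoid_density 0 = 1) by (unfold avoid_density, avoid_count; simpl; lra).
  nra.
Qed.

Lemma lower_envelope_cv : Un_cv lower_envelope (INR b ^ p * (ln (INR b) - delta b k)).
Proof.
  pose proof (avoid_density_cv b p W Hb Hp HW) as Hz.
  replace (INR b ^ p * (ln (INR b) - delta b k))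
    with (INR b ^ p * (1 - 0) * (ln (INR b) - delta b k - INR k * INR b * 0)) by ring.
  apply CV_mult; [apply CV_mult; [apply Un_cv_const | apply CV_minus; [apply Un_cv_const | now apply CV_shift']]|].
  apply CV_minus; [apply Un_cv_const | apply CV_mult; [apply Un_cv_const | exact Hz]].
Qed.

End Bounds.

Lemma delta_powerRZ b p k : (2 <= b)%nat ->
  INR b ^ p * delta b k = (INR b - 1) * powerRZ (INR b) (Z.of_nat p - Z.of_nat (Nat.max k 2) + 1).
Proof.
  intros Hb. unfold delta. set (e := (Nat.max k 2 - 1)%nat).
  replace (Z.of_nat p - Z.of_nat (Nat.max k 2) + 1)%Z with (Z.of_nat p - Z.of_nat e)%Z by (unfold e; lia).
  pose proof (INR_pow_pos b e ltac:(lia)). pose proof (INR_pos b ltac:(lia)).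
  assert (E : powerRZ (INR b) (Z.of_nat p - Z.of_nat e) * INR b ^ e = INR b ^ p).
  { rewrite !pow_powerRZ, <- powerRZ_add by lra. f_equal. lia. }
  rewrite <- E. field. lra.
Qed.

Lemma harmonic_term_nonneg b p W k m : 0 <= harmonic_term b p W k m.
Proof.
  unfold harmonic_term. destruct (_ =? k); simpl ind; [|lra].
  destruct m as [|m]; [simpl; rewrite Rinv_0; lra|].
  rewrite Rmult_1_l. left. apply Rinv_0_lt_compat, INR_pos. lia.
Qed.

Lemma sum_f_R0_S_term b w k N : (2 <= b)%nat -> (1 <= length w)%nat ->
  List.Forall (fun d => (d < b)%nat) w -> (1 <= k)%nat ->
  sum_f_R0 (S_term b w k) N = sumR (harmonic_term b (length w) (eval_digits b w) k) (S (S N)).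
Proof.
  intros Hb Hp Hw Hk. rewrite sumR_succ_l.
  replace (harmonic_term b (length w) (eval_digits b w) k 0) with 0
    by (unfold harmonic_term; rewrite occs_0; destruct k; [lia | simpl; lra]).
  assert (Hterm : forall n, S_term b w k n = harmonic_term b (length w) (eval_digits b w) k (S n)).
  { intros n. unfold S_term, harmonic_term. rewrite occ_digits by assumption.
    now destruct (_ =? k); simpl; lra. }
  rewrite Rplus_0_l. induction N as [|N IH]; cbn [sum_f_R0 sumR]; rewrite Hterm; [lra|].
  rewrite IH. reflexivity.
Qed.

Section PartialSums.

Variables (b : nat) (w : list nat) (k : nat).
Hypothesis Hb : (2 <= b)%nat.
Hypothesis Hp : (1 <= length w)%nat.
Hypothesis Hw : List.Forall (fun d => (d < b)%nat) w.
Hypothesis Hk : (1 <= k)%nat.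

Local Notation h := (harmonic_term b (length w) (eval_digits b w) k).

Lemma S_term_nonneg n : 0 <= S_term b w k n.
Proof. unfold S_term. destruct (_ =? k); [left; apply Rinv_0_lt_compat, INR_pos; lia | lra]. Qed.

Lemma sum_f_R0_S_term_le N : sum_f_R0 (S_term b w k) N <= sumR h (b ^ S (S N)).
Proof.
  rewrite sum_f_R0_S_term by assumption.
  apply sumR_le_length; [apply harmonic_term_nonneg|]. apply Nat.lt_le_incl, Nat.pow_gt_lin_r. lia.
Qed.

Lemma sum_f_R0_S_term_ge n : sumR h (b ^ n) <= sum_f_R0 (S_term b w k) (b ^ n).
Proof.
  rewrite sum_f_R0_S_term by assumption.
  apply sumR_le_length; [apply harmonic_term_nonneg|]. pose proof (Nat.pow_gt_lin_r b n ltac:(lia)). lia.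
Qed.

End PartialSums.

Theorem theorem1 (b : nat) (w : list nat) (k : nat) :
  (2 <= b)%nat -> (1 <= length w)%nat -> List.Forall (fun d => (d < b)%nat) w ->
  (1 <= k)%nat ->
  exists S : R, is_series (S_term b w k) S /\
    Rabs (S - INR b ^ length w * ln (INR b))
      <= (INR b - 1) * powerRZ (INR b) (Z.of_nat (length w) - Z.of_nat (Nat.max k 2) + 1)%Z.
Proof.
  intros Hb Hp Hw Hk.
  set (p := length w) in *. set (W := eval_digits b w).
  assert (HW : (W < b ^ p)%nat) by now apply eval_digits_lt.
  destruct (series_between (S_term b w k) (lower_envelope b p W k)
              (INR b ^ p * (ln (INR b) - delta b k)) (INR b ^ p * (ln (INR b) + delta b k)))
    as [S [HS Hbounds]].
  - now apply S_term_nonneg.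
  - intros N. eapply Rle_trans; [now apply sum_f_R0_S_term_le | now apply harmonic_sum_upper].
  - now apply lower_envelope_cv.
  - intros l. exists (b ^ (l + S (k * l)))%nat.
    eapply Rle_trans; [now apply harmonic_sum_lower | now apply sum_f_R0_S_term_ge].
  - exists S. split; [exact HS|]. rewrite <- delta_powerRZ by exact Hb. apply Rabs_le. lra.
Qed.
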